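(* Let $A\in \mathbb{Z}^{m\times n}$, $b\in \mathbb{Z}^m$. If $Ax=b$ has a $p$-adic solution and a $q$-adic solution, for distinct primes $p$ and $q$, then $Ax=b$ has an integral solution.
   Context: For a prime $p$, a $p$-adic rational is a number $a/p^k$ with $a,k\in\mathbb{Z}$, $k\ge0$; a vector is $p$-adic if all entries are $p$-adic rationals. *)

From HB Require Import structures.
From mathcomp Require Import all_boot all_order all_algebra.
Set Implicit Arguments. Unset Strict Implicit. Unset Printing Implicit Defensive.
Import Order.TTheory GRing.Theory Num.Theory.
Local Open Scope ring_scope.

Definition padic_rat (p : nat) (x : rat) : Prop :=
  exists (a : int) (k : nat), x = a%:~R / (p%:R ^+ k).

Definition padic_vec (p n : nat) (x : 'cV[rat]_n) : Prop :=
  forall i, padic_rat p (x i 0).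

Definition intmx_to_rat (m n : nat) (A : 'M[int]_(m, n)) : 'M[rat]_(m, n) :=
  map_mx (fun z : int => z%:~R) A.

From HB Require Import structures.
From mathcomp Require Import all_boot all_order all_algebra.
From mathcomp Require Import ring.
Set Implicit Arguments. Unset Strict Implicit. Unset Printing Implicit Defensive.
Import Order.TTheory GRing.Theory Num.Theory.
Local Open Scope ring_scope.

(* Clearing the denominators of a p-adic solution x of A x = b gives an
   integral u with A u = p^K b; likewise A v = q^L b.  As p^K and q^L are
   coprime, a Bezout relation s p^K + t q^L = 1 yields the integral solution
   s u + t v. *)

Lemma intmx_to_rat_inj (m n : nat) : injective (@intmx_to_rat m n).
Proof.
move=> A B eqAB; apply/matrixP => i j.
by have := congr1 (fun M : 'M[rat]_(m, n) => M i j) eqAB; rewrite !mxE => /intr_inj.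
Qed.

Lemma intmx_to_ratM (m n k : nat) (A : 'M[int]_(m, n)) (B : 'M[int]_(n, k)) :
  intmx_to_rat (A *m B) = intmx_to_rat A *m intmx_to_rat B.
Proof. exact: map_mxM. Qed.

Lemma intmx_to_ratZ (m n : nat) (c : int) (A : 'M[int]_(m, n)) :
  intmx_to_rat (c *: A) = c%:~R *: intmx_to_rat A.
Proof. exact: map_mxZ. Qed.

Lemma mul_expn_div_expn (p k K : nat) (a : int) : (0 < p)%N -> (k <= K)%N ->
  (p ^ K)%:R * (a%:~R / p%:R ^+ k) = (a * (p ^ (K - k))%:Z)%:~R :> rat.
Proof.
move=> p_gt0 le_kK.
have pk_neq0 : p%:R ^+ k != 0 :> rat by rewrite expf_neq0 // pnatr_eq0 -lt0n.
rewrite intrM -pmulrn !natrX -(subnKC le_kK) exprD addKn.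
by field.
Qed.

Lemma padic_vec_scale_int (p n : nat) (x : 'cV[rat]_n) : (0 < p)%N ->
  padic_vec p x -> exists (K : nat) (u : 'cV[int]_n), intmx_to_rat u = (p ^ K)%:R *: x.
Proof.
move=> p_gt0 px.
have /fin_all_exists [f xE] :
    forall i : 'I_n, exists ak : int * nat, x i 0 = ak.1%:~R / p%:R ^+ ak.2.
  by move=> i; have [a [k ->]] := px i; exists (a, k).
pose K := (\max_i (f i).2)%N.
exists K, (\col_i ((f i).1 * (p ^ (K - (f i).2))%:Z)).
apply/matrixP => i j; rewrite (ord1 j) !mxE xE mul_expn_div_expn //.
by rewrite /K (leq_bigmax i).
Qed.

Section IntegralSolutions.
Variables (m n : nat) (A : 'M[int]_(m, n)) (b : 'cV[int]_m).

Lemma int_solution_of_scaled (d : int) (x : 'cV[rat]_n) (u : 'cV[int]_n) :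
  intmx_to_rat A *m x = intmx_to_rat b -> intmx_to_rat u = d%:~R *: x ->
  A *m u = d *: b.
Proof.
move=> Ax_b uE; apply: intmx_to_rat_inj.
by rewrite intmx_to_ratM intmx_to_ratZ uE -scalemxAr Ax_b.
Qed.

Lemma padic_solution_scale_int (p : nat) : (0 < p)%N ->
  (exists x : 'cV[rat]_n, padic_vec p x /\ intmx_to_rat A *m x = intmx_to_rat b) ->
  exists (K : nat) (u : 'cV[int]_n), A *m u = (p ^ K)%:Z *: b.
Proof.
move=> p_gt0 [x [px Ax_b]].
have [K [u uE]] := padic_vec_scale_int p_gt0 px.
by exists K, u; apply: (int_solution_of_scaled (d := (p ^ K)%:Z) Ax_b uE).
Qed.

Lemma int_solution_of_coprime_multiples (c d : int) (u v : 'cV[int]_n) :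
  coprimez c d -> A *m u = c *: b -> A *m v = d *: b ->
  exists z : 'cV[int]_n, A *m z = b.
Proof.
move=> cop_cd Au Av; have [s [t st_gcd]] := Bezoutz c d.
exists (s *: u + t *: v).
by rewrite mulmxDr -!scalemxAr Au Av !scalerA -scalerDl st_gcd (eqP cop_cd) scale1r.
Qed.

End IntegralSolutions.

Lemma coprime_prime_expn (p q K L : nat) : prime p -> prime q -> p != q ->
  coprime (p ^ K) (q ^ L).
Proof.
move=> p_pr q_pr neq_pq.
rewrite coprimeXl // coprime_sym coprimeXl // prime_coprime //.
by rewrite dvdn_prime2 // eq_sym.
Qed.

Theorem corollary2p5 (m n p q : nat) (A : 'M[int]_(m, n)) (b : 'cV[int]_m) :
  prime p -> prime q -> p != q ->
  (exists x : 'cV[rat]_n, padic_vec p x /\ intmx_to_rat A *m x = intmx_to_rat b) ->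
  (exists y : 'cV[rat]_n, padic_vec q y /\ intmx_to_rat A *m y = intmx_to_rat b) ->
  exists z : 'cV[int]_n, A *m z = b.
Proof.
move=> p_pr q_pr neq_pq p_sol q_sol.
have [K [u Au]] := padic_solution_scale_int (prime_gt0 p_pr) p_sol.
have [L [v Av]] := padic_solution_scale_int (prime_gt0 q_pr) q_sol.
apply: (int_solution_of_coprime_multiples _ Au Av).
by rewrite coprimezE; exact: coprime_prime_expn.
Qed.
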